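(* For every $n\ge1$, the set of two-sided ideals of the algebra $\mathbb{S}_n$ satisfies the ascending chain condition: every ascending chain $I_1\subseteq I_2\subseteq\cdots$ of two-sided ideals of $\mathbb{S}_n$ stabilizes.
   Context: $K$ is a field. $\mathbb{S}_n$ is the $K$-algebra generated by $x_1,\dots,x_n,y_1,\dots,y_n$ subject to the defining relations $y_ix_i=1$ for all $i$, and $[x_i,y_j]=[x_i,x_j]=[y_i,y_j]=0$ for all $i\ne j$, where $[a,b]=ab-ba$. (This algebra is neither left nor right Noetherian.) *)

From HB Require Import structures.
From mathcomp Require Import all_boot all_order all_algebra.
Set Implicit Arguments. Unset Strict Implicit. Unset Printing Implicit Defensive.
Import GRing.Theory.
Local Open Scope ring_scope.

Definition commr (R : pzRingType) (a b : R) : R := a * b - b * a.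

Definition Sn_relations (K : fieldType) (B : algType K) (n : nat)
    (x y : 'I_n -> B) : Prop :=
  (forall i, y i * x i = 1) /\
  (forall i j, i != j ->
     [/\ commr (x i) (y j) = 0, commr (x i) (x j) = 0 & commr (y i) (y j) = 0]).

Definition is_alg_hom (K : fieldType) (A B : algType K) (f : A -> B) : Prop :=
  [/\ forall a b, f (a + b) = f a + f b,
      forall a b, f (a * b) = f a * f b,
      f 1 = 1 &
      forall (k : K) a, f (k *: a) = k *: f a].

(* (A, x, y) is the K-algebra generated by x_1..x_n, y_1..y_n subject to the
   defining relations of S_n, i.e. it satisfies the universal property of
   that presentation: the relations hold in A, and for every K-algebra B
   with elements satisfying the relations there is a unique K-algebra
   homomorphism A -> B sending x_i, y_i to the given elements. *)
Definition is_Sn (K : fieldType) (n : nat) (A : algType K) (x y : 'I_n -> A)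
  : Prop :=
  Sn_relations x y /\
  forall (B : algType K) (x' y' : 'I_n -> B), Sn_relations x' y' ->
    (exists f : A -> B, is_alg_hom f /\ (forall i, f (x i) = x' i /\ f (y i) = y' i)) /\
    (forall f g : A -> B, is_alg_hom f -> is_alg_hom g ->
       (forall i, f (x i) = g (x i) /\ f (y i) = g (y i)) ->
       forall a, f a = g a).

Definition two_sided_ideal (R : pzRingType) (I : R -> Prop) : Prop :=
  [/\ I 0,
      forall a b, I a -> I b -> I (a + b),
      forall r a, I a -> I (r * a) &
      forall r a, I a -> I (a * r)].

Definition acc_two_sided_ideals (R : pzRingType) : Prop :=
  forall I : nat -> R -> Prop,
    (forall k, two_sided_ideal (I k)) ->
    (forall k a, I k a -> I k.+1 a) ->
    exists m, forall k, (m <= k)%N -> forall a, I k a <-> I m a.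

(* Write S_m for the subalgebra of A generated by the x_i, y_i with i < m, so
   that S_0 = K 1 and, by the universal property of the presentation,
   S_n = A.  We prove ACC for the ideals of every S_m by induction on m, in
   the style of Hilbert's basis theorem; S_0 is a field.  For the step let
   C = S_m, S = S_(m+1), X = x_m and Y = y_m: then YX = 1, C commutes with X
   and Y, and E = 1 - XY is an idempotent with E Y^s X^u E = [s = u] E, so the
   E_st = X^s E Y^t behave as matrix units.  Their C-span F is an ideal of S,
   and every a in S has a normal form X^r a = sum_j c_j X^j + p with c_j in C
   and p in F.  To an ideal I of S we attach ideals of C: the corner ideal
   {c | cE in I} and, for every degree d, the ideal of leading coefficients of
   degree d.  Two nested ideals of S with the same invariants coincide, and
   ACC in C makes all the invariants of an ascending chain stabilize at once. *)
From HB Require Import structures.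
From mathcomp Require Import all_boot all_order all_algebra.
From mathcomp Require Import boolp.
Set Implicit Arguments. Unset Strict Implicit. Unset Printing Implicit Defensive.
Import GRing.Theory.
Local Open Scope ring_scope.

Inductive gen (K : fieldType) (A : algType K) (n : nat) (x y : 'I_n -> A)
    (m : nat) : A -> Prop :=
| gen_scalar (k : K) : gen x y m k%:A
| gen_x (i : 'I_n) : (i < m)%N -> gen x y m (x i)
| gen_y (i : 'I_n) : (i < m)%N -> gen x y m (y i)
| gen_add a b : gen x y m a -> gen x y m b -> gen x y m (a + b)
| gen_mul a b : gen x y m a -> gen x y m b -> gen x y m (a * b).

Section Generated.
Variables (K : fieldType) (n : nat) (A : algType K) (x y : 'I_n -> A).

Lemma gen_mono m m' a : (m <= m')%N -> gen x y m a -> gen x y m' a.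
Proof.
move=> le_mm'; elim=> {a} [k|i lt_im|i lt_im|a b _ ha _ hb|a b _ ha _ hb].
- exact: gen_scalar.
- exact/gen_x/(leq_trans lt_im).
- exact/gen_y/(leq_trans lt_im).
- exact: gen_add.
- exact: gen_mul.
Qed.

Lemma gen1 m : gen x y m 1.
Proof. by rewrite -[1 : A]scale1r; apply: gen_scalar. Qed.

Lemma gen0 m : gen x y m 0.
Proof. by rewrite -(scale0r (1 : A)); apply: gen_scalar. Qed.

Lemma genN m a : gen x y m a -> gen x y m (- a).
Proof.
by move=> ha; rewrite -scaleN1r -mulr_algl; apply: gen_mul => //; apply: gen_scalar.
Qed.

Lemma genB m a b : gen x y m a -> gen x y m b -> gen x y m (a - b).
Proof. by move=> ha hb; apply: gen_add => //; apply: genN. Qed.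

Lemma genX m a k : gen x y m a -> gen x y m (a ^+ k).
Proof.
move=> ha; elim: k => [|k ih]; first by rewrite expr0; apply: gen1.
by rewrite exprS; apply: gen_mul.
Qed.

Lemma gen_sum m (T : eqType) (s : seq T) (F : T -> A) :
  (forall l, l \in s -> gen x y m (F l)) -> gen x y m (\sum_(l <- s) F l).
Proof.
elim: s => [|l s ih] hs; first by rewrite big_nil; apply: gen0.
rewrite big_cons; apply: gen_add; first by apply: hs; rewrite mem_head.
by apply: ih => l' hl'; apply: hs; rewrite in_cons hl' orbT.
Qed.

End Generated.

(* Working with
   carriers inside A lets us run an induction over the subalgebras
   gen x y m without building each of them as a separate type. *)
Definition ideal_in (A : pzRingType) (S I : A -> Prop) : Prop :=
  [/\ forall a, I a -> S a, I 0, forall a b, I a -> I b -> I (a + b),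
      forall s a, S s -> I a -> I (s * a) & forall s a, S s -> I a -> I (a * s)].

Definition acc_in (A : pzRingType) (S : A -> Prop) : Prop :=
  forall I : nat -> A -> Prop, (forall k, ideal_in S (I k)) ->
    (forall k a, I k a -> I k.+1 a) ->
    exists m, forall k, (m <= k)%N -> forall a, I k a <-> I m a.

Lemma ideal_inN (A : pzRingType) (S I : A -> Prop) a :
  ideal_in S I -> S (-1) -> I a -> I (- a).
Proof. by case=> _ _ _ IS _ SN1 Ia; rewrite -mulN1r; apply: IS. Qed.

Lemma ideal_inB (A : pzRingType) (S I : A -> Prop) a b :
  ideal_in S I -> S (-1) -> I a -> I b -> I (a - b).
Proof.
by move=> hI SN1 Ia Ib; case: (hI) => _ _ ID _ _; apply: ID => //; apply: (ideal_inN hI).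
Qed.

Lemma ideal_in_sum (A : pzRingType) (S I : A -> Prop) (T : eqType) (r : seq T)
    (G : T -> A) :
  ideal_in S I -> (forall i, i \in r -> I (G i)) -> I (\sum_(i <- r) G i).
Proof.
move=> [_ I0 ID _ _]; elim: r => [|i r ih] hr; first by rewrite big_nil.
rewrite big_cons; apply: ID; first by apply: hr; rewrite mem_head.
by apply: ih => j hj; apply: hr; rewrite in_cons hj orbT.
Qed.

Lemma subr_common_head (V : zmodType) (a b c e f : V) :
  (a + b + c) - (a + e + f) = (b - e) + (c - f).
Proof. by rewrite !opprD !addrA (addrAC (a + b) c) (addrAC a b) subrr add0r (addrAC b c). Qed.

Lemma addr3ACA (V : zmodType) (u1 v1 w1 u2 v2 w2 : V) :
  u1 + v1 + w1 + (u2 + v2 + w2) = (u1 + u2) + (v1 + v2) + (w1 + w2).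
Proof. by rewrite addrACA (addrACA u1). Qed.

Section Chains.
Variable T : Type.

Lemma chain_le (I : nat -> T -> Prop) : (forall k a, I k a -> I k.+1 a) ->
  forall k k' a, (k <= k')%N -> I k a -> I k' a.
Proof.
move=> I_incr k k' a; elim: k' => [|k' ih]; first by rewrite leqn0 => /eqP ->.
by rewrite leq_eqVlt => /orP [/eqP -> //|]; rewrite ltnS => /ih Ik /Ik /I_incr.
Qed.

Lemma stable_from_later (I : nat -> T -> Prop) m M :
  (forall k, (m <= k)%N -> forall a, I k a <-> I m a) -> (m <= M)%N ->
  forall k, (M <= k)%N -> forall a, I k a <-> I M a.
Proof.
by move=> stab le_mM k le_Mk a; rewrite (stab k (leq_trans le_mM le_Mk)) (stab M le_mM).
Qed.

Lemma stable_uniformly (F : nat -> nat -> T -> Prop) :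
  (forall d, exists m, forall k, (m <= k)%N -> forall a, F d k a <-> F d m a) ->
  forall D, exists M, forall d, (d < D)%N ->
    forall k, (M <= k)%N -> forall a, F d k a <-> F d M a.
Proof.
move=> stab; elim=> [|D [M hM]]; first by exists 0%N.
have [MD hMD] := stab D; exists (maxn M MD) => d; rewrite ltnS leq_eqVlt.
case/orP=> [/eqP ->|lt_dD]; first by apply: (stable_from_later hMD); apply: leq_maxr.
by apply: (stable_from_later (hM d lt_dD)); apply: leq_maxl.
Qed.

End Chains.

(* A K-algebra presented as S_n is generated by the x_i and y_i: the
   subalgebra they generate satisfies the same universal property, so the
   inclusion of that subalgebra is onto by the uniqueness clause. *)
Section GeneratedSubalgebra.
Variables (K : fieldType) (n : nat) (A : algType K) (x y : 'I_n -> A).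

Definition genb : pred A := fun a => `[< gen x y n a >].

Lemma genb_subalg_closed : GRing.subsemialg_closed genb.
Proof.
split; first exact/asboolP/gen1.
- by split=> [|a b /asboolP ha /asboolP hb]; apply/asboolP; [apply: gen0 | apply: gen_add].
- move=> k a /asboolP ha; apply/asboolP; rewrite -mulr_algl.
  by apply: gen_mul => //; apply: gen_scalar.
- by move=> a b /asboolP ha /asboolP hb; apply/asboolP; apply: gen_mul.
Qed.

HB.instance Definition _ :=
  GRing.isSubalgClosed.Build K A genb genb_subalg_closed.

Record gen_subalg := GenSubalg { gen_val : A; _ : gen_val \in genb }.
HB.instance Definition _ := [isSub for gen_val].
HB.instance Definition _ := [Choice of gen_subalg by <:].
HB.instance Definition _ := [SubChoice_isSubAlgebra of gen_subalg by <:].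

Definition x_sub i : gen_subalg := GenSubalg (introT (asboolP _) (gen_x x y (ltn_ord i))).
Definition y_sub i : gen_subalg := GenSubalg (introT (asboolP _) (gen_y x y (ltn_ord i))).

Lemma Sn_generated : is_Sn x y -> forall a, gen x y n a.
Proof.
move=> [rel univ].
have rel_sub : Sn_relations x_sub y_sub.
  case: rel => yx comm; split=> [i|i j neq_ij]; first by apply: val_inj; rewrite /= yx.
  by case: (comm i j neq_ij) => c1 c2 c3; split; apply: val_inj.
have [[f [f_hom f_gen]] _] := univ _ x_sub y_sub rel_sub.
have [_ uniq] := univ _ x y rel.
have comp_hom : is_alg_hom (fun a => gen_val (f a)).
  case: f_hom => fD fM f1 fZ; split=> [a b|a b||k a]; by rewrite ?fD ?fM ?f1 ?fZ.
have id_hom : is_alg_hom (fun a : A => a) by [].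
move=> a; rewrite -(uniq _ _ comp_hom id_hom _ a); first exact/asboolP/(valP (f a)).
by move=> i; case: (f_gen i) => -> ->.
Qed.

End GeneratedSubalgebra.

(* Base of the induction: gen x y 0 = K 1 is a field, so its only ideals
   are 0 and the whole subalgebra, and every chain of them stabilizes. *)
Section ScalarSubalgebra.
Variables (K : fieldType) (n : nat) (A : algType K) (x y : 'I_n -> A).

Lemma gen0_scalar a : gen x y 0 a -> exists k : K, a = k%:A.
Proof.
elim=> {a} [k|//|//|a b _ [k ->] _ [l ->]|a b _ [k ->] _ [l ->]].
- by exists k.
- by exists (k + l); rewrite scalerDl.
- by exists (k * l); rewrite mulr_algl scalerA.
Qed.

Lemma gen0_ideal_full (I : A -> Prop) a : ideal_in (gen x y 0) I -> I a -> a <> 0 ->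
  forall b, gen x y 0 b -> I b.
Proof.
move=> [I_sub _ _ IS SI] Ia a_neq0 b hb.
have [k a_eq] := gen0_scalar (I_sub _ Ia).
have k_neq0 : k != 0 by apply: contra_notN a_neq0 => /eqP k0; rewrite a_eq k0 scale0r.
have I1 : I 1.
  have -> : (1 : A) = k^-1%:A * a by rewrite a_eq mulr_algl scalerA mulVf // scale1r.
  exact/IS/Ia/gen_scalar.
by rewrite -(mul1r b); apply: SI.
Qed.

Lemma acc_gen0 : acc_in (gen x y 0).
Proof.
move=> I I_ideal I_incr.
have [[k [a [Ika a_neq0]]]|all_zero] := pselect (exists k a, I k a /\ a <> 0).
  have full j : (k <= j)%N -> forall b, gen x y 0 b -> I j b.
    by move=> le_kj; apply: (gen0_ideal_full (I_ideal j) (chain_le I_incr le_kj Ika)).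
  exists k => j le_kj b; have [Ij_sub _ _ _ _] := I_ideal j.
  have [Ik_sub _ _ _ _] := I_ideal k.
  by split=> [/Ij_sub|/Ik_sub]; apply: full.
have zero j b : I j b -> b = 0.
  by move=> Ijb; apply: contrapT => b_neq0; apply: all_zero; exists j, b.
exists 0%N => j _ b; have [_ Ij0 _ _ _] := I_ideal j; have [_ I00 _ _ _] := I_ideal 0%N.
by split=> /zero ->.
Qed.

End ScalarSubalgebra.

Section Step.
Variables (K : fieldType) (n : nat) (A : algType K) (x y : 'I_n -> A).
Hypothesis yx : forall i, y i * x i = 1.
Hypothesis comm_xy : forall i j, i != j ->
  [/\ commr (x i) (y j) = 0, commr (x i) (x j) = 0 & commr (y i) (y j) = 0].
Variables (m : nat) (lt_mn : (m < n)%N).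

Local Notation X := (x (Ordinal lt_mn)).
Local Notation Y := (y (Ordinal lt_mn)).
Local Notation C := (gen x y m).
Local Notation S := (gen x y m.+1).

(* The idempotent E = 1 - XY; it is locked so that rewriting never sees
   through it. *)
Fact E_key : unit. Proof. exact: tt. Qed.
Definition E : A := locked_with E_key (1 - X * Y).
Lemma E_def : E = 1 - X * Y. Proof. by rewrite /E unlock. Qed.

(* The matrix units E_st = X^s E Y^t of the Jacobson algebra K<X, Y | YX = 1>. *)
Definition Est (st : nat * nat) : A := X ^+ st.1 * E * Y ^+ st.2.

Lemma comm_of_commr (a b : A) : commr a b = 0 -> GRing.comm a b.
Proof. by rewrite /commr => /eqP; rewrite subr_eq0 => /eqP. Qed.

Lemma C_comm_XY c : C c -> GRing.comm c X /\ GRing.comm c Y.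
Proof.
elim=> {c} [k|i lt_im|i lt_im|a b _ [aX aY] _ [bX bY]|a b _ [aX aY] _ [bX bY]].
- by split; rewrite /GRing.comm mulr_algl mulr_algr.
- have neq_im : i != Ordinal lt_mn by rewrite neq_ltn lt_im.
  by case: (comm_xy neq_im) => xy xx _; split; apply: comm_of_commr.
- have neq_im : i != Ordinal lt_mn by rewrite neq_ltn lt_im.
  have neq_mi : Ordinal lt_mn != i by rewrite eq_sym.
  case: (comm_xy neq_mi) => xy _ _; case: (comm_xy neq_im) => _ _ yy.
  by split; [apply/commr_sym/comm_of_commr | apply: comm_of_commr].
- by split; apply/commr_sym/commrD; apply/commr_sym.
- by split; apply/commr_sym/commrM; apply/commr_sym.
Qed.

Lemma C_commXn c k : C c -> GRing.comm c (X ^+ k).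
Proof. by move/C_comm_XY=> [cX _]; apply: commrX. Qed.

Lemma C_commYn c k : C c -> GRing.comm c (Y ^+ k).
Proof. by move/C_comm_XY=> [_ cY]; apply: commrX. Qed.

Lemma C_commE c : C c -> GRing.comm c E.
Proof.
move/C_comm_XY=> [cX cY]; rewrite E_def.
by apply: commrB; [apply: commr1 | apply: commrM].
Qed.

Lemma C_commEst c st : C c -> GRing.comm c (Est st).
Proof.
move=> Cc; apply: commrM; last exact: C_commYn.
by apply: commrM; [apply: C_commXn | apply: C_commE].
Qed.

Lemma index_lower_or_last (i : 'I_n) : (i < m.+1)%N -> (i < m)%N \/ i = Ordinal lt_mn.
Proof. by rewrite ltnS leq_eqVlt => /orP [/eqP e|lt_im]; [right; apply: val_inj | left]. Qed.

Lemma C_S c : C c -> S c. Proof. exact: gen_mono. Qed.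
Lemma S_X : S X. Proof. exact: gen_x. Qed.
Lemma S_Y : S Y. Proof. exact: gen_y. Qed.
Lemma S_E : S E.
Proof.
by rewrite E_def; apply: genB; [apply: gen1 | apply: gen_mul; [apply: S_X | apply: S_Y]].
Qed.
Lemma S_Xn k : S (X ^+ k). Proof. exact/genX/S_X. Qed.
Lemma S_Yn k : S (Y ^+ k). Proof. exact/genX/S_Y. Qed.
Lemma S_N1 : S (-1). Proof. exact/genN/gen1. Qed.

Lemma YX : Y * X = 1. Proof. exact: yx. Qed.
Lemma EX : E * X = 0. Proof. by rewrite E_def mulrBl mul1r -mulrA YX mulr1 subrr. Qed.
Lemma YE : Y * E = 0. Proof. by rewrite E_def mulrBr mulr1 mulrA YX mul1r subrr. Qed.
Lemma EE : E * E = E. Proof. by rewrite {1}E_def mulrBl mul1r -mulrA YE mulr0 subr0. Qed.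

Lemma YnXn k : Y ^+ k * X ^+ k = 1.
Proof.
elim: k => [|k ih]; first by rewrite !expr0 mulr1.
by rewrite exprSr exprS -mulrA (mulrA Y) YX mul1r ih.
Qed.

Lemma YsXu s u : Y ^+ s * X ^+ u = if (s <= u)%N then X ^+ (u - s) else Y ^+ (s - u).
Proof.
case: leqP => [le_su|/ltnW le_us].
  by rewrite -(subnKC le_su) exprD mulrA YnXn mul1r addKn.
by rewrite -(subnK le_us) exprD -mulrA YnXn mulr1 addnK.
Qed.

(* E Y^s X^u E = [s = u] E: the E_st multiply like matrix units. *)
Lemma EYsXuE s u : E * Y ^+ s * X ^+ u * E = if s == u then E else 0.
Proof.
rewrite -(mulrA E) YsXu; case: ltngtP => [lt_su|lt_us|->].
- by rewrite -(subnSK lt_su) exprS mulrA EX mul0r mul0r.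
- by rewrite -(subnSK lt_us) exprSr -!mulrA YE !mulr0.
- by rewrite subnn expr0 mulr1 EE.
Qed.

Definition C_coefs (T : eqType) (s : seq (A * T)) : Prop := forall l, l \in s -> C l.1.

Lemma C_coefs_cat (T : eqType) (s t : seq (A * T)) :
  C_coefs s -> C_coefs t -> C_coefs (s ++ t).
Proof. by move=> hs ht l; rewrite mem_cat => /orP [/hs|/ht]. Qed.

Lemma C_coefs_sum (T : eqType) (s : seq (A * T)) (P : pred (A * T)) :
  C_coefs s -> C (\sum_(l <- s | P l) l.1).
Proof.
move=> hs; rewrite big_mkcond; apply: gen_sum => l /hs Cl.
by case: (P l) => //; apply: gen0.
Qed.

Definition term (l : A * (nat * nat)) : A := l.1 * Est l.2.
Definition in_F (p : A) : Prop :=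
  exists2 s : seq (A * (nat * nat)), C_coefs s & p = \sum_(l <- s) term l.

Lemma F0 : in_F 0. Proof. by exists [::]; rewrite ?big_nil. Qed.

Lemma F_add p q : in_F p -> in_F q -> in_F (p + q).
Proof.
by move=> [s hs ->] [t ht ->]; exists (s ++ t); rewrite ?big_cat //; apply: C_coefs_cat.
Qed.

Lemma F_term c st : C c -> in_F (c * Est st).
Proof.
by move=> Cc; exists [:: (c, st)]; rewrite ?big_seq1 // => l; rewrite inE => /eqP ->.
Qed.

Lemma F_sum (T : eqType) (r : seq T) (G : T -> A) :
  (forall i, i \in r -> in_F (G i)) -> in_F (\sum_(i <- r) G i).
Proof.
elim: r => [|i r ih] hr; first by rewrite big_nil; apply: F0.
rewrite big_cons; apply: F_add; first by apply: hr; rewrite mem_head.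
by apply: ih => j hj; apply: hr; rewrite in_cons hj orbT.
Qed.

Lemma F_additive (op : A -> A) : op 0 = 0 -> {morph op : u v / u + v} ->
  (forall c st, C c -> in_F (op (c * Est st))) -> forall p, in_F p -> in_F (op p).
Proof.
move=> op0 opD op_term p [s hs ->]; rewrite (big_morph op opD op0).
by apply: F_sum => l /hs; apply: op_term.
Qed.

Lemma F_mulC c p : C c -> in_F p -> in_F (c * p) /\ in_F (p * c).
Proof.
move=> Cc Fp; split.
  apply: (F_additive (mulr0 c) (mulrDr c)) Fp => c' st Cc'.
  by rewrite mulrA; apply/F_term/gen_mul.
apply: (F_additive (mul0r c) (fun u v => mulrDl u v c)) Fp => c' st Cc'.
by rewrite -mulrA -(C_commEst st Cc) mulrA; apply/F_term/gen_mul.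
Qed.

Lemma F_mulX p : in_F p -> in_F (X * p) /\ in_F (p * X).
Proof.
move=> Fp; split.
  apply: (F_additive (mulr0 X) (mulrDr X)) Fp => c [s t] Cc.
  have -> : X * (c * Est (s, t)) = c * Est (s.+1, t).
    by rewrite mulrA -(proj1 (C_comm_XY Cc)) /Est /= exprS -!mulrA.
  exact: F_term.
apply: (F_additive (mul0r X) (fun u v => mulrDl u v X)) Fp => c [s [|t]] Cc.
  by rewrite /Est /= expr0 mulr1 -!mulrA EX !mulr0; apply: F0.
have -> : c * Est (s, t.+1) * X = c * Est (s, t).
  by rewrite /Est /= exprSr -!mulrA YX mulr1.
exact: F_term.
Qed.

Lemma F_mulY p : in_F p -> in_F (Y * p) /\ in_F (p * Y).
Proof.
move=> Fp; split.
  apply: (F_additive (mulr0 Y) (mulrDr Y)) Fp => c [[|s] t] Cc;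
    rewrite mulrA -(proj2 (C_comm_XY Cc)) -mulrA.
    by rewrite /Est /= expr0 mul1r (mulrA Y) YE mul0r mulr0; apply: F0.
  have -> : Y * Est (s.+1, t) = Est (s, t) by rewrite /Est /= exprS !mulrA YX mul1r.
  exact: F_term.
apply: (F_additive (mul0r Y) (fun u v => mulrDl u v Y)) Fp => c [s t] Cc.
have -> : c * Est (s, t) * Y = c * Est (s, t.+1) by rewrite /Est /= exprSr !mulrA.
exact: F_term.
Qed.

Lemma F_mulS a p : S a -> in_F p -> in_F (a * p) /\ in_F (p * a).
Proof.
move=> Sa; elim: Sa p => {a} [k|i lt_im1|i lt_im1|a b _ ha _ hb|a b _ ha _ hb] p Fp.
- by apply: F_mulC Fp; apply: gen_scalar.
- case: (index_lower_or_last lt_im1) => [lt_im|->]; last exact: F_mulX.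
  by apply: F_mulC Fp; apply: gen_x.
- case: (index_lower_or_last lt_im1) => [lt_im|->]; last exact: F_mulY.
  by apply: F_mulC Fp; apply: gen_y.
- have [aFl aFr] := ha p Fp; have [bFl bFr] := hb p Fp.
  by rewrite mulrDl mulrDr; split; apply: F_add.
- split; first by rewrite -mulrA; apply: (proj1 (ha _ _)); apply: (proj1 (hb _ _)).
  by rewrite mulrA; apply: (proj2 (hb _ _)); apply: (proj2 (ha _ _)).
Qed.

Lemma F_opp p : in_F p -> in_F (- p).
Proof. by move=> Fp; rewrite -mulN1r; apply: (proj1 (F_mulS S_N1 Fp)). Qed.

Lemma F_sub p q : in_F p -> in_F q -> in_F (p - q).
Proof. by move=> Fp Fq; apply: F_add => //; apply: F_opp. Qed.

Lemma F_E : in_F E.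
Proof.
have -> : E = 1 * Est (0, 0)%N by rewrite /Est /= !expr0 !mul1r mulr1.
exact/F_term/gen1.
Qed.

Definition xpoly (s : seq (A * nat)) : A := \sum_(l <- s) l.1 * X ^+ l.2.

Lemma xpoly_cat s t : xpoly (s ++ t) = xpoly s + xpoly t.
Proof. by rewrite /xpoly big_cat. Qed.

Lemma xpoly_S s : C_coefs s -> S (xpoly s).
Proof.
by move=> hs; apply: gen_sum => l /hs Cl; apply: gen_mul; [apply: C_S | apply: S_Xn].
Qed.

Lemma xpoly_commXn s r : C_coefs s -> GRing.comm (xpoly s) (X ^+ r).
Proof.
move=> hs; rewrite /xpoly big_seq; apply/commr_sym/commr_sum => l /hs Cl; apply: commrM.
  exact/commr_sym/C_commXn.
by rewrite /GRing.comm -!exprD addnC.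
Qed.

(* Such polynomials form a ring, since C commutes with X. *)
Lemma xpoly_mul s t : C_coefs s -> C_coefs t ->
  exists2 u, C_coefs u & xpoly s * xpoly t = xpoly u.
Proof.
move=> hs ht; exists [seq (l.1 * l'.1, (l.2 + l'.2)%N) | l <- s, l' <- t].
  move=> _ /allpairsP [[l l'] [/= hl hl' ->]]; exact: gen_mul (hs _ hl) (ht _ hl').
rewrite /xpoly big_allpairs_dep mulr_suml; apply: eq_bigr => l _.
rewrite big_seq mulr_sumr [RHS]big_seq; apply: eq_bigr => l' /ht Cl' /=.
by rewrite -mulrA (mulrA (X ^+ _)) -(C_commXn _ Cl') exprD !mulrA.
Qed.

Lemma xpoly_monomial c k : xpoly [:: (c, k)] = c * X ^+ k.
Proof. by rewrite /xpoly big_seq1. Qed.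

Lemma C_coefs_monomial (T : eqType) c (k : T) : C c -> C_coefs [:: (c, k)].
Proof. by move=> Cc l; rewrite inE => /eqP ->. Qed.

Lemma xpoly_shift r s : C_coefs s -> exists2 u, C_coefs u & X ^+ r * xpoly s = xpoly u.
Proof.
have C1r : C_coefs [:: (1, r)] by apply/C_coefs_monomial/gen1.
by move=> hs; have [u hu e] := xpoly_mul C1r hs; exists u; rewrite // -e xpoly_monomial mul1r.
Qed.

Definition normal_form (a : A) : Prop :=
  exists r s p, [/\ C_coefs s, in_F p & X ^+ r * a = xpoly s + p].

Lemma normal_form_monomial c k : C c -> normal_form (c * X ^+ k).
Proof.
move=> Cc; exists 0%N, [:: (c, k)], 0; split; rewrite ?xpoly_monomial ?expr0 ?mul1r ?addr0 //.
- exact: C_coefs_monomial.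
- exact: F0.
Qed.

Lemma normal_form_C c : C c -> normal_form c.
Proof. by move=> Cc; rewrite -[c]mulr1 -(expr0 X); apply: normal_form_monomial. Qed.

Lemma normal_form_Y : normal_form Y.
Proof.
exists 1%N, [:: (1, 0%N)], (- E); split.
- exact/C_coefs_monomial/gen1.
- exact/F_opp/F_E.
- by rewrite xpoly_monomial expr1 expr0 mulr1 E_def opprB addrC subrK.
Qed.

Lemma normal_form_add a b : normal_form a -> normal_form b -> normal_form (a + b).
Proof.
move=> [r1 [s1 [p1 [hs1 hp1 e1]]]] [r2 [s2 [p2 [hs2 hp2 e2]]]].
have [u1 hu1 f1] := xpoly_shift r2 hs1; have [u2 hu2 f2] := xpoly_shift r1 hs2.
exists (r1 + r2)%N, (u1 ++ u2), (X ^+ r2 * p1 + X ^+ r1 * p2); split.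
- exact: C_coefs_cat.
- by apply: F_add; apply: (proj1 (F_mulS (S_Xn _) _)).
- rewrite mulrDr {1}addnC !exprD -!mulrA e1 e2 !mulrDr f1 f2 xpoly_cat.
  by rewrite -!addrA; congr (_ + _); rewrite addrCA.
Qed.

Lemma normal_form_mul a b : S b -> normal_form a -> normal_form b -> normal_form (a * b).
Proof.
move=> Sb [r1 [s1 [p1 [hs1 hp1 e1]]]] [r2 [s2 [p2 [hs2 hp2 e2]]]].
have [u hu f] := xpoly_mul hs1 hs2.
exists (r1 + r2)%N, u, (xpoly s1 * p2 + X ^+ r2 * (p1 * b)); split => //.
- apply: F_add; first exact: (proj1 (F_mulS (xpoly_S hs1) hp2)).
  exact: (proj1 (F_mulS (S_Xn r2) (proj2 (F_mulS Sb hp1)))).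
- rewrite addnC exprD -mulrA (mulrA (X ^+ r1)) e1 mulrDl mulrDr.
  by rewrite (mulrA (X ^+ r2)) -(xpoly_commXn r2 hs1) -mulrA e2 mulrDr f addrA.
Qed.

Lemma normal_formS a : S a -> normal_form a.
Proof.
elim=> {a} [k|i lt_im1|i lt_im1|a b _ ha _ hb|a b _ ha Sb hb].
- exact/normal_form_C/gen_scalar.
- case: (index_lower_or_last lt_im1) => [lt_im|->]; first exact/normal_form_C/gen_x.
  by rewrite -[X]mul1r -[X in _ * X]expr1; apply/normal_form_monomial/gen1.
- case: (index_lower_or_last lt_im1) => [lt_im|->]; last exact: normal_form_Y.
  exact/normal_form_C/gen_y.
- exact: normal_form_add.
- exact: normal_form_mul.
Qed.

Lemma extract_term c st uv : C c ->
  E * Y ^+ uv.1 * (c * Est st) * X ^+ uv.2 * E = if st == uv then c * E else 0.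
Proof.
case: st uv => [s t] [u v] Cc; rewrite /Est /=.
have -> : E * Y ^+ u * (c * (X ^+ s * E * Y ^+ t)) * X ^+ v * E =
          c * ((E * Y ^+ u * X ^+ s * E) * (E * Y ^+ t * X ^+ v * E)).
  have cEY : GRing.comm c (E * Y ^+ u).
    by apply: commrM; [apply: C_commE | apply: C_commYn].
  by rewrite (mulrA (E * Y ^+ u)) -cEY !mulrA -(mulrA _ E E) EE.
rewrite !EYsXuE xpair_eqE (eq_sym u).
by case: eqVneq; case: eqVneq; rewrite /= ?(EE, mulr0, mul0r).
Qed.

Definition coefF (s : seq (A * (nat * nat))) (uv : nat * nat) : A :=
  \sum_(l <- s | l.2 == uv) l.1.

Lemma extract_F s uv : C_coefs s ->
  E * Y ^+ uv.1 * (\sum_(l <- s) term l) * X ^+ uv.2 * E = coefF s uv * E.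
Proof.
move=> hs; rewrite mulr_sumr !mulr_suml /coefF [RHS]big_mkcond /= !big_seq.
by apply: eq_bigr => l /hs Cl; rewrite extract_term.
Qed.

Lemma F_regroup s :
  \sum_(l <- s) term l = \sum_(uv <- undup (map snd s)) coefF s uv * Est uv.
Proof.
under [RHS]eq_bigr => uv _ do rewrite /coefF mulr_suml big_mkcond.
rewrite exchange_big /=; apply: eq_big_seq => l l_s.
rewrite -big_mkcond /= -big_filter (eq_filter (a2 := pred1 l.2)); last first.
  by move=> uv; rewrite /= eq_sym.
rewrite filter_pred1_uniq ?undup_uniq ?mem_undup ?map_f // big_seq1.
by rewrite /term.
Qed.

Definition corner (I : A -> Prop) (c : A) : Prop := C c /\ I (c * E).

Definition below (d : nat) (s : seq (A * nat)) : Prop :=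
  forall l, l \in s -> C l.1 /\ (l.2 < d)%N.

Definition lead (I : A -> Prop) (d : nat) (c : A) : Prop :=
  C c /\ exists s p, [/\ below d s, in_F p & I (c * X ^+ d + xpoly s + p)].

Lemma below_C_coefs d s : below d s -> C_coefs s.
Proof. by move=> hs l /hs []. Qed.

Lemma below_exists s : C_coefs s -> exists d, below d s.
Proof.
move=> hs; exists (\max_(l <- s) l.2).+1 => l l_s; split; first exact: hs.
by rewrite ltnS; apply: leq_bigmax_seq.
Qed.

(* If the corner ideal of I' is contained in that of I, then every element
   of F lying in I' lies in I: each coefficient of an element of F is
   extracted by two-sided multiplication and lands in the corner ideal. *)
Lemma F_part_descends (I I' : A -> Prop) : ideal_in S I -> ideal_in S I' ->
  (forall c, corner I' c -> corner I c) -> forall p, in_F p -> I' p -> I p.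
Proof.
move=> hI [_ _ _ IS' SI'] corner_sub p [s hs ->] I'p.
have [_ _ _ IS SI] := hI.
rewrite F_regroup; apply: (ideal_in_sum hI) => [[u v]] _.
have Cc := C_coefs_sum (fun l => l.2 == (u, v)) hs.
have [_ IcE] : corner I (coefF s (u, v)).
  apply: corner_sub; split=> //; rewrite -(extract_F (u, v) hs).
  apply: (SI'); first exact: S_E.
  apply: (SI'); first exact: S_Xn.
  by apply: (IS') => //; apply: gen_mul; [apply: S_E | apply: S_Yn].
have -> : coefF s (u, v) * Est (u, v) = X ^+ u * (coefF s (u, v) * E) * Y ^+ v.
  by rewrite /Est /= !mulrA (C_commXn u Cc).
by apply: SI; [apply: S_Yn | apply: IS; [apply: S_Xn | apply: IcE]].
Qed.

Definition coefX (s : seq (A * nat)) (d : nat) : A := \sum_(l <- s | l.2 == d) l.1.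

Lemma xpoly_split s d :
  xpoly s = coefX s d * X ^+ d + xpoly [seq l <- s | l.2 != d].
Proof.
rewrite /coefX /xpoly big_filter [LHS](bigID (fun l => l.2 == d)) /= mulr_suml.
by congr (_ + _); apply: eq_bigr => l /eqP ->.
Qed.

Lemma xpoly_opp s : xpoly [seq (- l.1, l.2) | l <- s] = - xpoly s.
Proof. by rewrite /xpoly big_map -sumrN; apply: eq_bigr => l _; rewrite mulNr. Qed.

(* Descent on the degree: if moreover I is contained in I' and every
   leading-coefficient ideal of I' is contained in that of I, then every
   element xpoly s + p of I' lies in I.  Its leading coefficient is matched
   by an element of I, and the difference has smaller degree. *)
Lemma poly_part_descends (I I' : A -> Prop) : ideal_in S I -> ideal_in S I' ->
  (forall a, I a -> I' a) -> (forall c, corner I' c -> corner I c) ->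
  (forall d c, lead I' d c -> lead I d c) ->
  forall d s p, below d s -> in_F p -> I' (xpoly s + p) -> I (xpoly s + p).
Proof.
move=> hI hI' incl corner_sub lead_sub d; elim: d => [|d ih] s p hs hp I'a.
  case: s hs I'a => [_|l s hs]; last by case: (hs l (mem_head _ _)).
  by rewrite /xpoly big_nil add0r; apply: F_part_descends.
set c := coefX s d; set r := [seq l <- s | l.2 != d].
have Cc : C c by apply/C_coefs_sum/below_C_coefs/hs.
have hr : below d r.
  move=> l; rewrite mem_filter => /andP [neq_ld /hs [Cl lt_ld]].
  by split; rewrite // ltn_neqAle neq_ld -ltnS.
have [_ [s2 [p2 [hs2 hp2 Ib]]]] : lead I d c.
  by apply: lead_sub; split=> //; exists r, p; rewrite -xpoly_split.
set b := c * X ^+ d + xpoly s2 + p2 in Ib.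
have diff : xpoly s + p - b = xpoly (r ++ [seq (- l.1, l.2) | l <- s2]) + (p - p2).
  by rewrite xpoly_cat xpoly_opp (xpoly_split s d) -/c -/r subr_common_head.
have Idiff : I (xpoly s + p - b).
  rewrite diff; apply: ih; last by rewrite -diff; apply: (ideal_inB hI' S_N1 I'a (incl _ Ib)).
  - move=> l; rewrite mem_cat => /orP [/hr //|/mapP [l' /hs2 [Cl' lt_l'd] ->]].
    by split=> //; apply: genN.
  - exact: F_sub.
by rewrite -(subrK b (xpoly s + p)); case: hI => _ _ ID _ _; apply: ID.
Qed.

(* Two nested ideals I <= I' of S with the same invariants in C are equal:
   by the normal form, X^r a is a polynomial plus an element of F. *)
Lemma ideal_eq_of_invariants (I I' : A -> Prop) : ideal_in S I -> ideal_in S I' ->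
  (forall a, I a -> I' a) -> (forall c, corner I' c -> corner I c) ->
  (forall d c, lead I' d c -> lead I d c) -> forall a, I' a -> I a.
Proof.
move=> hI hI' incl corner_sub lead_sub a I'a.
have [I'_sub _ _ IS' _] := hI'; have [_ _ _ IS _] := hI.
have [r [s [p [hs hp e]]]] := normal_formS (I'_sub _ I'a).
have [d hd] := below_exists hs.
have IXa : I (X ^+ r * a).
  rewrite e; apply: (poly_part_descends hI hI' incl corner_sub lead_sub hd hp).
  by rewrite -e; apply: IS' => //; apply: S_Xn.
by rewrite -[a]mul1r -(YnXn r) -mulrA; apply: IS => //; apply: S_Yn.
Qed.

Lemma corner_ideal I : ideal_in S I -> ideal_in C (corner I).
Proof.
case=> _ I0 ID IS SI; split.
- by move=> a [].
- by split; [apply: gen0 | rewrite mul0r].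
- by move=> a b [Ca Ia] [Cb Ib]; split; [apply: gen_add | rewrite mulrDl; apply: ID].
- move=> c a Cc [Ca Ia]; split; first exact: gen_mul.
  by rewrite -mulrA; apply: IS => //; apply: C_S.
- move=> c a Cc [Ca Ia]; split; first exact: gen_mul.
  by rewrite -mulrA (C_commE Cc) mulrA; apply: SI => //; apply: C_S.
Qed.

Lemma xpoly_mulC_l c s : c * xpoly s = xpoly [seq (c * l.1, l.2) | l <- s].
Proof. by rewrite /xpoly big_map mulr_sumr; apply: eq_bigr => l _; rewrite mulrA. Qed.

Lemma xpoly_mulC_r c s : C c -> xpoly s * c = xpoly [seq (l.1 * c, l.2) | l <- s].
Proof.
move=> Cc; rewrite /xpoly big_map mulr_suml; apply: eq_bigr => l _ /=.
by rewrite -mulrA -(C_commXn _ Cc) mulrA.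
Qed.

Lemma xpoly_mulX s : C_coefs s -> X * xpoly s = xpoly [seq (l.1, l.2.+1) | l <- s].
Proof.
move=> hs; rewrite /xpoly big_map mulr_sumr !big_seq; apply: eq_bigr => l /hs Cl /=.
by rewrite mulrA -(proj1 (C_comm_XY Cl)) -mulrA exprS.
Qed.

Lemma below_map d d' (f : A -> A) (g : nat -> nat) s :
  (forall c, C c -> C (f c)) -> (forall k, (k < d)%N -> (g k < d')%N) ->
  below d s -> below d' [seq (f l.1, g l.2) | l <- s].
Proof. by move=> fC gd hs _ /mapP [l /hs [Cl lt_ld] ->]; split; [apply: fC | apply: gd]. Qed.

Lemma lead_ideal I d : ideal_in S I -> ideal_in C (lead I d).
Proof.
case=> _ I0 ID IS SI; split.
- by move=> a [].
- split; first exact: gen0.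
  exists [::], 0; split; [by [] | exact: F0 | by rewrite mul0r /xpoly big_nil !addr0].
- move=> a b [Ca [s1 [p1 [hs1 hp1 e1]]]] [Cb [s2 [p2 [hs2 hp2 e2]]]].
  split; first exact: gen_add.
  exists (s1 ++ s2), (p1 + p2); split; last first.
  + by rewrite mulrDl xpoly_cat -addr3ACA; apply: ID.
  + exact: F_add.
  + by move=> l; rewrite mem_cat => /orP [/hs1|/hs2].
- move=> c a Cc [Ca [s1 [p1 [hs1 hp1 e1]]]].
  split; first exact: gen_mul.
  exists [seq (c * l.1, l.2) | l <- s1], (c * p1); split.
  + by apply: (below_map (f := *%R c) (g := id)) hs1 => // c' Cc'; apply: gen_mul.
  + exact: (proj1 (F_mulC Cc hp1)).
  + by rewrite -mulrA -xpoly_mulC_l -!mulrDr; apply: IS => //; apply: C_S.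
- move=> c a Cc [Ca [s1 [p1 [hs1 hp1 e1]]]].
  split; first exact: gen_mul.
  exists [seq (l.1 * c, l.2) | l <- s1], (p1 * c); split.
  + by apply: (below_map (f := *%R^~ c) (g := id)) hs1 => // c' Cc'; apply: gen_mul.
  + exact: (proj2 (F_mulC Cc hp1)).
  + rewrite -mulrA (C_commXn _ Cc) mulrA -xpoly_mulC_r // -!mulrDl.
    by apply: SI => //; apply: C_S.
Qed.

(* Multiplying by X shows that the leading-coefficient ideals increase with d. *)
Lemma lead_succ I d c : ideal_in S I -> lead I d c -> lead I d.+1 c.
Proof.
case=> _ _ _ IS _ [Cc [s [p [hs hp e]]]].
split=> //; exists [seq (l.1, l.2.+1) | l <- s], (X * p); split.
- exact: (below_map (f := id) (g := succn)) hs.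
- exact: (proj1 (F_mulX hp)).
- rewrite exprS mulrA (proj1 (C_comm_XY Cc)) -mulrA -xpoly_mulX; last exact: below_C_coefs hs.
  by rewrite -!mulrDr; apply: IS => //; apply: S_X.
Qed.

Lemma lead_le I d d' c : ideal_in S I -> (d <= d')%N -> lead I d c -> lead I d' c.
Proof. by move=> hI; apply: (chain_le (I := lead I)) => k a; apply: lead_succ hI. Qed.

Lemma lead_incl (I I' : A -> Prop) d c : (forall a, I a -> I' a) -> lead I d c -> lead I' d c.
Proof.
by move=> incl [Cc [s [p [hs hp e]]]]; split=> //; exists s, p; split=> //; apply: incl.
Qed.

Definition lead_any (I : A -> Prop) (c : A) : Prop := exists d, lead I d c.

Lemma lead_any_ideal I : ideal_in S I -> ideal_in C (lead_any I).
Proof.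
move=> hI; have hL d := lead_ideal d hI; split.
- by move=> a [d]; case: (hL d) => sub _ _ _ _; apply: sub.
- by exists 0%N; case: (hL 0%N).
- move=> a b [d1 h1] [d2 h2]; exists (maxn d1 d2).
  case: (hL (maxn d1 d2)) => _ _ LD _ _; apply: LD.
  + by apply: (lead_le hI _ h1); rewrite leq_maxl.
  + by apply: (lead_le hI _ h2); rewrite leq_maxr.
- by move=> c a Cc [d h]; exists d; case: (hL d) => _ _ _ LS _; apply: LS.
- by move=> c a Cc [d h]; exists d; case: (hL d) => _ _ _ _ SL; apply: SL.
Qed.

(* The invariants of a chain (I_k) of ideals of S form
   chains of ideals of C: the corner ideals, the ideals of all leading
   coefficients, the leading-coefficient ideals of a fixed I_k0 (as d grows)
   and finitely many chains (lead I_k d)_k for small d. Once all of these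
   have stabilized, ideal_eq_of_invariants shows that the chain itself has. *)
Lemma acc_step : acc_in C -> acc_in S.
Proof.
move=> accC I I_ideal I_incr; have I_le := chain_le I_incr.
have [mJ stabJ] := accC (fun k => corner (I k)) (fun k => corner_ideal (I_ideal k))
  (fun k a h => conj h.1 (I_incr _ _ h.2)).
have [m0 stab0] := accC (fun k => lead_any (I k)) (fun k => lead_any_ideal (I_ideal k))
  (fun k c '(ex_intro d hd) => ex_intro _ d (lead_incl (I_incr k) hd)).
have [d0 stab_d0] := accC (lead (I m0)) (fun d => lead_ideal d (I_ideal m0))
  (fun d c => lead_succ (I_ideal m0)).
have [M1 stabM1] := stable_uniformly (fun d => accC (fun k => lead (I k) d)
  (fun k => lead_ideal d (I_ideal k)) (fun k c => lead_incl (I_incr k))) d0.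
set M := maxn mJ (maxn m0 M1).
have le_mJ : (mJ <= M)%N by rewrite leq_maxl.
have le_m0 : (m0 <= M)%N by rewrite (leq_trans (leq_maxl m0 M1)) ?leq_maxr.
have le_M1 : (M1 <= M)%N by rewrite (leq_trans (leq_maxr m0 M1)) ?leq_maxr.
exists M => k le_Mk a; split; last exact: I_le.
apply: ideal_eq_of_invariants (I_ideal M) (I_ideal k) (fun b => I_le _ _ b le_Mk) _ _ _.
- by move=> c; rewrite (stable_from_later stabJ le_mJ le_Mk).
move=> d c; have [lt_dd0|le_d0d] := ltnP d d0.
  by rewrite (stable_from_later (stabM1 d lt_dd0) le_M1 le_Mk).
move=> Lkc; have [d' Lc] : lead_any (I m0) c.
  by rewrite -(stab0 k (leq_trans le_m0 le_Mk)); exists d.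
have L0c : lead (I m0) d0 c.
  have [le_d'd0|lt_d0d'] := leqP d' d0; first exact: lead_le le_d'd0 Lc.
  by rewrite -(stab_d0 d' (ltnW lt_d0d')).
apply: (lead_le (I_ideal M) le_d0d).
exact: lead_incl (fun b => I_le _ _ b le_m0) L0c.
Qed.

End Step.

Lemma acc_gen (K : fieldType) (n : nat) (A : algType K) (x y : 'I_n -> A) :
  Sn_relations x y -> forall m, (m <= n)%N -> acc_in (gen x y m).
Proof.
move=> [yx comm_xy]; elim=> [|m ih] lt_mn; first exact: acc_gen0.
exact: (acc_step yx comm_xy lt_mn (ih (ltnW lt_mn))).
Qed.

Theorem theorem2p7 (K : fieldType) (n : nat) (hn : (1 <= n)%N)
    (A : algType K) (x y : 'I_n -> A) :
  is_Sn x y -> acc_two_sided_ideals A.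
Proof.
move=> hSn I I_ideal I_incr.
have all_gen := Sn_generated hSn.
apply: (acc_gen hSn.1 (leqnn n)) I_incr => k.
case: (I_ideal k) => I0 ID IS SI.
by split=> // s a _; [apply: IS | apply: SI].
Qed.
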